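(* Let $\Omega$ be a finite set, $K\ge 1$ the number of labels, and let $A$ be a symmetric real $|\Omega|\times|\Omega|$ affinity matrix; put $d=A\mathbf{1}$ and $D=\mathrm{diag}(d)$. For a labeling $S:\Omega\to\{1,\dots,K\}$ identify each segment $S^k=\{p:S_p=k\}$ with its indicator vector in $\{0,1\}^{\Omega}$. Consider one of the three clustering objectives (defined for labelings with all segments nonempty; for NC assume $d_p>0$ for all $p$): (AA) $E_A(S)=-\sum_k \frac{{S^k}'AS^k}{\mathbf{1}'S^k}$, with $\mathcal{K}=\delta I+A$, $w=\mathbf{1}$; (AC) $E_A(S)=\sum_k \frac{{S^k}'(D-A)S^k}{\mathbf{1}'S^k}$, with $\mathcal{K}=\delta I+A-D$, $w=\mathbf{1}$; (NC) $E_A(S)=-\sum_k \frac{{S^k}'AS^k}{d'S^k}$, with $\mathcal{K}=\delta D+A$, $w=d$; where $\delta\in\mathbb{R}$ is chosen large enough that the corresponding $\mathcal{K}$ is positive semi-definite. Define $\hat e(X)=-\frac{X'\mathcal{K}X}{w'X}$ and, for $w'X>0$, $$\nabla\hat e(X)= w\,\frac{X'\mathcal{K}X}{(w'X)^2}-\mathcal{K}X\,\frac{2}{w'X}.$$ Let $\mathcal{F}$ be any collection of subsets (factors) $c\subseteq\Omega$, let $E_c$ be arbitrary real functions of the restricted labeling $S_c=(S_p)_{p\in c}$, let $\gamma\in\mathbb{R}$, and let $E(S)=E_A(S)+\gamma\sum_{c\in\mathcal{F}}E_c(S_c)$. Let $S_t$ be any labeling with all segments nonempty and define $$a_t(S)=\sum_{k=1}^K\nabla\hat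 e(S^k_t)'\,S^k+\gamma\sum_{c\in\mathcal{F}}E_c(S_c).$$ Then for every labeling $S$ with all segments nonempty, $E(S)\le a_t(S)+K\delta$, with equality for $S=S_t$; i.e. $a_t+K\delta$ is an auxiliary function for $E$ at $S_t$.
   Context: An auxiliary function for an energy $E$ at $S_t$ is a function $a$ with $E(S)\le a(S)$ for all admissible $S$ and $E(S_t)=a(S_t)$. $\mathbf{1}$ is the all-ones vector, $I$ the identity matrix, and $'$ denotes transpose. *)

From HB Require Import structures.
From mathcomp Require Import all_boot all_order all_algebra.
Set Implicit Arguments. Unset Strict Implicit. Unset Printing Implicit Defensive.
Import Order.TTheory GRing.Theory Num.Theory.
Local Open Scope ring_scope.

(* Omega = 'I_n, labels = 'I_K, labelings S : 'I_n -> 'I_K. *)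

Inductive objective := AA | AC | NC.

Section Defs.
Variable R : realFieldType.
Variable n K : nat.

Definition qf (x : 'cV[R]_n) (M : 'M[R]_n) (y : 'cV[R]_n) : R := (x^T *m M *m y) 0 0.
Definition dotv (x y : 'cV[R]_n) : R := (x^T *m y) 0 0.

Definition ones : 'cV[R]_n := const_mx 1.
Definition degv (A : 'M[R]_n) : 'cV[R]_n := A *m ones.
Definition degm (A : 'M[R]_n) : 'M[R]_n := diag_mx (degv A)^T.

Definition seg (S : 'I_n -> 'I_K) (k : 'I_K) : 'cV[R]_n := \col_p (S p == k)%:R.

Definition all_nonempty (S : 'I_n -> 'I_K) : Prop := forall k : 'I_K, exists p, S p = k.

Definition psd (M : 'M[R]_n) : Prop := forall x : 'cV[R]_n, 0 <= qf x M x.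

Definition EA (o : objective) (A : 'M[R]_n) (S : 'I_n -> 'I_K) : R :=
  match o with
  | AA => - \sum_k qf (seg S k) A (seg S k) / dotv ones (seg S k)
  | AC => \sum_k qf (seg S k) (degm A - A) (seg S k) / dotv ones (seg S k)
  | NC => - \sum_k qf (seg S k) A (seg S k) / dotv (degv A) (seg S k)
  end.

Definition Kmat (o : objective) (delta : R) (A : 'M[R]_n) : 'M[R]_n :=
  match o with
  | AA => delta%:M + A
  | AC => delta%:M + A - degm A
  | NC => delta *: degm A + A
  end.

Definition wvec (o : objective) (A : 'M[R]_n) : 'cV[R]_n :=
  match o with
  | AA | AC => ones
  | NC => degv A
  end.

Definition ehat (o : objective) (delta : R) (A : 'M[R]_n) (X : 'cV[R]_n) : R :=
  - qf X (Kmat o delta A) X / dotv (wvec o A) X.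

Definition grad_ehat (o : objective) (delta : R) (A : 'M[R]_n) (X : 'cV[R]_n)
  : 'cV[R]_n :=
  (qf X (Kmat o delta A) X / (dotv (wvec o A) X) ^+ 2) *: wvec o A
  - (2 / dotv (wvec o A) X) *: (Kmat o delta A *m X).

Definition restr (S : 'I_n -> 'I_K) (c : {set 'I_n}) : {x : 'I_n | x \in c} -> 'I_K :=
  fun x => S (val x).
Arguments restr S c : clear implicits.

Definition Efull (o : objective) (A : 'M[R]_n) (gamma : R) (F : {set {set 'I_n}})
  (Ec : forall c : {set 'I_n}, ({x : 'I_n | x \in c} -> 'I_K) -> R)
  (S : 'I_n -> 'I_K) : R :=
  EA o A S + gamma * \sum_(c in F) Ec c (restr S c).

Definition aux_t (o : objective) (delta : R) (A : 'M[R]_n) (gamma : R)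
  (F : {set {set 'I_n}})
  (Ec : forall c : {set 'I_n}, ({x : 'I_n | x \in c} -> 'I_K) -> R)
  (St S : 'I_n -> 'I_K) : R :=
  \sum_k dotv (grad_ehat o delta A (seg St k)) (seg S k)
  + gamma * \sum_(c in F) Ec c (restr S c).

End Defs.

(* On indicator vectors x'x = 1'x and x'Dx = d'x, so in all three cases
   E_A(S) = sum_k ehat(S^k) + K delta.  For positive semi-definite K the map
   X |-> - X'KX / w'X is concave on the half-space w'X > 0, and being
   homogeneous of degree one its tangent plane at Y is the linear form
   X |-> grad(Y)'X.  Summing the tangent inequalities over the segments gives
   the bound, with equality at S_t; the factor terms appear identically on
   both sides. *)

From HB Require Import structures.
From mathcomp Require Import all_boot all_order all_algebra.
From mathcomp Require Import ring lra.
Import Order.TTheory GRing.Theory Num.Theory.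
Local Open Scope ring_scope.

Section BilinearForm.
Set Implicit Arguments. Unset Strict Implicit.
Variables (R : realFieldType) (n : nat).
Implicit Types (x y z : 'cV[R]_n) (M N : 'M[R]_n).

Lemma dotvE x y : dotv x y = \sum_i x i 0 * y i 0.
Proof. by rewrite /dotv mxE; apply: eq_bigr => i _; rewrite mxE. Qed.

Lemma dotvBl x y z : dotv (x - y) z = dotv x z - dotv y z.
Proof. by rewrite /dotv raddfB /= mulmxBl !mxE. Qed.

Lemma dotvZl a x z : dotv (a *: x) z = a * dotv x z.
Proof. by rewrite /dotv linearZ /= -scalemxAl mxE. Qed.

Lemma qfBl x y M z : qf (x - y) M z = qf x M z - qf y M z.
Proof. by rewrite /qf raddfB /= !mulmxBl !mxE. Qed.

Lemma qfZl a x M z : qf (a *: x) M z = a * qf x M z.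
Proof. by rewrite /qf linearZ /= -!scalemxAl mxE. Qed.

Lemma qfBr x M y z : qf x M (y - z) = qf x M y - qf x M z.
Proof. by rewrite /qf mulmxBr !mxE. Qed.

Lemma qfZr a x M z : qf x M (a *: z) = a * qf x M z.
Proof. by rewrite /qf -scalemxAr mxE. Qed.

Lemma qfDm x M N z : qf x (M + N) z = qf x M z + qf x N z.
Proof. by rewrite /qf mulmxDr mulmxDl mxE. Qed.

Lemma qfBm x M N z : qf x (M - N) z = qf x M z - qf x N z.
Proof. by rewrite /qf mulmxBr mulmxBl !mxE. Qed.

Lemma qfZm a x M z : qf x (a *: M) z = a * qf x M z.
Proof. by rewrite /qf -scalemxAr -scalemxAl mxE. Qed.

Lemma qf_scalar c x y : qf x c%:M y = c * dotv x y.
Proof. by rewrite /qf mul_mx_scalar -scalemxAl mxE. Qed.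

Lemma qfC x M y : M^T = M -> qf x M y = qf y M x.
Proof.
move=> symM; rewrite /qf -[in LHS](trmxK (x^T *m M *m y)) mxE.
by rewrite !trmx_mul trmxK symM mulmxA.
Qed.

Lemma dotv_mull M y x : M^T = M -> dotv (M *m y) x = qf y M x.
Proof. by move=> symM; rewrite /dotv /qf trmx_mul symM. Qed.

End BilinearForm.

Section RatioTangent.
Set Implicit Arguments. Unset Strict Implicit.
Variables (R : realFieldType) (n : nat) (M : 'M[R]_n) (w : 'cV[R]_n).
Hypothesis symM : M^T = M.

Definition ratio_grad (y : 'cV[R]_n) : 'cV[R]_n :=
  (qf y M y / (dotv w y) ^+ 2) *: w - (2 / dotv w y) *: (M *m y).

Lemma ratio_grad_self y : dotv w y != 0 ->
  dotv (ratio_grad y) y = - qf y M y / dotv w y.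
Proof. by move=> wy_neq0; rewrite dotvBl !dotvZl dotv_mull //; field. Qed.

(* The gap, multiplied by w'x, is the form at x - (w'x / w'y) y. *)
Lemma neg_ratio_le_ratio_grad x y : (forall z, 0 <= qf z M z) ->
  0 < dotv w x -> 0 < dotv w y -> - qf x M x / dotv w x <= dotv (ratio_grad y) x.
Proof.
move=> psdM wx_gt0 wy_gt0.
set a := dotv w x in wx_gt0 *; set b := dotv w y in wy_gt0 *.
have := psdM (x - (a / b) *: y).
rewrite qfBl !qfBr !qfZl !qfZr [qf x M y]qfC //.
rewrite dotvBl !dotvZl dotv_mull // -/a -/b.
set p := qf x M x; set q := qf y M y; set r := qf y M x => gap_ge0.
rewrite -subr_ge0.
have -> : q / b ^+ 2 * a - 2 / b * r - - p / a =
   (p - a / b * r - (a / b * r - a / b * (a / b * q))) / a.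
  by field; rewrite !gt_eqF.
exact: divr_ge0 (ltW _).
Qed.

End RatioTangent.

Lemma grad_ehatE (R : realFieldType) n o delta (A : 'M[R]_n) X :
  grad_ehat o delta A X = ratio_grad (Kmat o delta A) (wvec o A) X.
Proof. by []. Qed.

Section Segments.
Set Implicit Arguments. Unset Strict Implicit.
Variables (R : realFieldType) (n K : nat).
Implicit Types (S : 'I_n -> 'I_K) (k : 'I_K).

Lemma dotv_seg_seg S k : dotv (seg R S k) (seg R S k) = dotv (ones R n) (seg R S k).
Proof.
rewrite !dotvE; apply: eq_bigr => i _; rewrite !mxE.
by case: eqP; rewrite ?mulr1 ?mulr0.
Qed.

Lemma qf_seg_degm S k (A : 'M[R]_n) :
  qf (seg R S k) (degm A) (seg R S k) = dotv (degv A) (seg R S k).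
Proof.
rewrite /qf /degm mul_mx_diag dotvE mxE; apply: eq_bigr => i _; rewrite !mxE.
by case: eqP; rewrite ?mulr1 ?mulr0 ?mul1r ?mul0r.
Qed.

Lemma dotv_seg_gt0 S k (d : 'cV[R]_n) : all_nonempty S -> (forall p, 0 < d p 0) ->
  0 < dotv d (seg R S k).
Proof.
move=> /(_ k) [p Sp] d_gt0; rewrite dotvE (bigD1 p) //=.
have rest_ge0 : 0 <= \sum_(i < n | i != p) d i 0 * seg R S k i 0.
  apply: sumr_ge0 => i _; rewrite !mxE.
  exact: mulr_ge0 (ltW (d_gt0 i)) (ler0n _ _).
by apply: ltr_pwDl rest_ge0; rewrite !mxE Sp eqxx mulr1.
Qed.

Lemma wvec_seg_gt0 o (A : 'M[R]_n) S k :
  (o = NC -> forall p, 0 < degv A p 0) -> all_nonempty S ->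
  0 < dotv (wvec o A) (seg R S k).
Proof.
move=> degNC S_ne; apply: dotv_seg_gt0 => // p.
by case: o degNC => [_|_|/(_ erefl)] //=; rewrite mxE.
Qed.

Lemma EA_sum_ehat o delta (A : 'M[R]_n) S :
  (forall k, dotv (wvec o A) (seg R S k) != 0) ->
  EA o A S = \sum_k ehat o delta A (seg R S k) + K%:R * delta.
Proof.
move=> w_neq0.
have -> : K%:R * delta = \sum_(k < K) delta.
  by rewrite sumr_const card_ord mulr_natl.
rewrite -big_split /=.
case: o w_neq0 => w_neq0; rewrite /EA -?sumrN; apply: eq_bigr => k _;
  move: (w_neq0 k); rewrite /ehat /Kmat /wvec => wS_neq0.
- by rewrite qfDm qf_scalar dotv_seg_seg; field.
- by rewrite !qfBm qfDm qf_scalar dotv_seg_seg qf_seg_degm; field.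
- by rewrite qfDm qfZm qf_seg_degm; field.
Qed.

End Segments.

Lemma Kmat_sym (R : realFieldType) n (A : 'M[R]_n) o delta : A^T = A ->
  (Kmat o delta A)^T = Kmat o delta A.
Proof.
move=> symA; case: o; rewrite /Kmat /degm ?linearD ?raddfB ?linearZ /=.
- by rewrite tr_scalar_mx symA.
- by rewrite linearN /= tr_scalar_mx tr_diag_mx symA.
- by rewrite tr_diag_mx symA.
Qed.

Theorem theorem2 (R : realFieldType) (n K : nat) (hK : (0 < K)%N)
  (A : 'M[R]_n) (hA : A^T = A) (o : objective)
  (hNC : o = NC -> forall p : 'I_n, 0 < degv A p 0)
  (delta : R) (hpsd : psd (Kmat o delta A))
  (F : {set {set 'I_n}})
  (Ec : forall c : {set 'I_n}, ({x : 'I_n | x \in c} -> 'I_K) -> R)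
  (gamma : R) (St : 'I_n -> 'I_K) (hSt : all_nonempty St) :
  (forall S : 'I_n -> 'I_K, all_nonempty S ->
     Efull o A gamma F Ec S <= aux_t o delta A gamma F Ec St S + K%:R * delta)
  /\ Efull o A gamma F Ec St = aux_t o delta A gamma F Ec St St + K%:R * delta.
Proof.
have w_gt0 (S : 'I_n -> 'I_K) k : all_nonempty S -> 0 < dotv (wvec o A) (seg R S k).
  exact: wvec_seg_gt0.
have EA_ehat (S : 'I_n -> 'I_K) : all_nonempty S ->
    EA o A S = \sum_k ehat o delta A (seg R S k) + K%:R * delta.
  by move=> S_ne; apply: EA_sum_ehat => k; rewrite gt_eqF ?w_gt0.
have symK := Kmat_sym o delta hA.
rewrite /Efull /aux_t; split.
- move=> S S_ne; rewrite EA_ehat // addrAC !lerD2r.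
  apply: ler_sum => k _.
  rewrite /ehat grad_ehatE.
  exact: (neg_ratio_le_ratio_grad symK hpsd (w_gt0 S k S_ne) (w_gt0 St k hSt)).
- rewrite EA_ehat // addrAC; congr (_ + _ + _); apply: eq_bigr => k _.
  by rewrite /ehat grad_ehatE ratio_grad_self // gt_eqF ?w_gt0.
Qed.
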